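(* Consider a transformer composed of $L$ layers with (1) output weights $\mathbf{H}\in\mathbb{R}^{m\times d}$, (2) self-attention weights: combined key-query weights $(\mathbf{W}_i)_{i=1}^L\in\mathbb{R}^{d\times d}$ and value weights $(\mathbf{V}_i)_{i=1}^L\in\mathbb{R}^{d\times d}$, (3) MLP weights $(\mathbf{M}^{(i)}_j)_{i=1,j=1}^{L,m}\in\mathbb{R}^{d\times d}$ and activation $\phi\in\{\text{ReLU},\text{Identity}\}$. For some $\Gamma>0$, assume $\|\mathbf{V}_i\|\leq 1,\|\mathbf{M}^{(i)}_j\|\leq 1, \|\mathbf{W}_i\|\leq \Gamma/2$ and $\|\mathbf{H}\|_{2,\infty}\leq c/m$. Suppose the input is $\mathcal{S}=(\mathbf{z}_1,\dots,\mathbf{z}_m)$ with $\|\mathbf{z}_i\|_2\leq 1$. The model prediction is given by $\mathcal{S}_{(0)}=\mathcal{S}$, layer $i$ outputs $\mathcal{S}_{(i)}=\texttt{Parallel\_MLP}_{\mathbf{M}^{(i)}}(\texttt{Att}_{\mathbf{W}_i,\mathbf{V}_i}(\mathcal{S}_{(i-1)}))$, where $\texttt{Att}_{\mathbf{W}_i,\mathbf{V}_i}(\mathcal{S})=\mathrm{softmax}(\mathcal{S}^\top \mathbf{W}_i \mathcal{S}) \mathcal{S}\mathbf{V}_i$ (row-wise softmax) and $\texttt{Parallel\_MLP}$ applies $\mathbf{x}\mapsto\phi(\mathbf{M}^{(i)}_{j}\mathbf{x})$ to the $j$-th token of the attention output, and $\mathrm{TF}(\mathcal{S})=\langle\mathbf{H},\mathcal{S}_{(L)}\rangle$.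 Then, first, this model is properly normalized in the sense that it can attain $\mathrm{TF}(\mathcal{S})=\pm c$. Second, this model obeys the stability guarantee \[ |\mathrm{TF}(\mathcal{S})-\mathrm{TF}(\mathcal{S}')|\leq \frac{c}{m}((1+\Gamma)e^\Gamma)^L \|\mathcal{S}-\mathcal{S}'\|_{2,1} \] for any two such inputs $\mathcal{S},\mathcal{S}'$.
   Context: For a matrix $\mathbf{A}$, $\|\mathbf{A}\|_{2,p}$ denotes the $\ell_p$ norm of the vector of Euclidean norms of its rows. *)

From HB Require Import structures.
From mathcomp Require Import all_boot all_order all_algebra.
From mathcomp Require Import all_classical all_reals all_analysis.
Set Implicit Arguments. Unset Strict Implicit. Unset Printing Implicit Defensive.
Import Order.TTheory GRing.Theory Num.Theory.
Local Open Scope classical_set_scope.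
Local Open Scope ring_scope.

(* Convention: a sequence S = (z_1,...,z_m) of tokens z_i in R^d is an
   m x d matrix whose i-th row is z_i (as a row vector).  A d x d matrix A
   acts on a token x as the usual matrix-vector product A x, which in row
   form is x *m A^T. *)

Inductive activation := ReLU | Identity.

Section Defs.
Context {R : realType}.

Definition norm2 {n : nat} (x : 'rV[R]_n) : R := Num.sqrt (\sum_i x 0 i ^+ 2).

Definition mv {n : nat} (A : 'M[R]_n) (x : 'rV[R]_n) : 'rV[R]_n := x *m A^T.

Definition opnorm {n : nat} (A : 'M[R]_n) : R :=
  sup [set norm2 (mv A x) | x in [set x : 'rV[R]_n | norm2 x <= 1]].

Definition norm2inf {m n : nat} (A : 'M[R]_(m, n)) : R :=
  \big[Num.max/0]_(i < m) norm2 (row i A).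
Definition norm21 {m n : nat} (A : 'M[R]_(m, n)) : R :=
  \sum_(i < m) norm2 (row i A).

Definition softmax {m : nat} (u : 'rV[R]_m) : 'rV[R]_m :=
  \row_j (expR (u 0 j) / \sum_k expR (u 0 k)).

Definition att {m d : nat} (W V : 'M[R]_d) (S : 'M[R]_(m, d)) : 'M[R]_(m, d) :=
  let scores : 'M[R]_m := \matrix_(i, j) ((row i S *m W^T) *m (row j S)^T) 0 0 in
  \matrix_(i, k) (\sum_j (softmax (row i scores)) 0 j * (mv V (row j S)) 0 k).

Definition act_fun (phi : activation) (x : R) : R :=
  match phi with ReLU => Num.max x 0 | Identity => x end.

Definition par_mlp {m d : nat} (phi : activation) (M : 'I_m -> 'M[R]_d)
  (X : 'M[R]_(m, d)) : 'M[R]_(m, d) :=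
  \matrix_(j, k) act_fun phi ((mv (M j) (row j X)) 0 k).

(* S_(k); layers are indexed 0, ..., L-1 (layer i+1 of the paper is index i) *)
Fixpoint tf_layers {m d : nat} (phi : activation) (W V : nat -> 'M[R]_d)
  (M : nat -> 'I_m -> 'M[R]_d) (k : nat) (S : 'M[R]_(m, d)) : 'M[R]_(m, d) :=
  match k with
  | 0 => S
  | k'.+1 => par_mlp phi (M k') (att (W k') (V k') (tf_layers phi W V M k' S))
  end.

Definition TF {m d : nat} (phi : activation) (L : nat) (H : 'M[R]_(m, d))
  (W V : nat -> 'M[R]_d) (M : nat -> 'I_m -> 'M[R]_d) (S : 'M[R]_(m, d)) : R :=
  \sum_(j < m) \sum_(k < d) H j k * (tf_layers phi W V M L S) j k.

Definition valid_weights {m d : nat} (L : nat) (c Gamma : R) (H : 'M[R]_(m, d))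
  (W V : nat -> 'M[R]_d) (M : nat -> 'I_m -> 'M[R]_d) : Prop :=
  (forall i, (i < L)%N ->
     opnorm (V i) <= 1 /\ (forall j, opnorm (M i j) <= 1) /\ opnorm (W i) <= Gamma / 2)
  /\ norm2inf H <= c / m%:R.

Definition valid_input {m d : nat} (S : 'M[R]_(m, d)) : Prop :=
  forall i, norm2 (row i S) <= 1.

End Defs.

From HB Require Import structures.
From mathcomp Require Import all_boot all_order all_algebra.
From mathcomp Require Import all_classical all_reals all_analysis.
From mathcomp Require Import ring lra.
Import Order.TTheory GRing.Theory Num.Theory numFieldNormedType.Exports.
Local Open Scope ring_scope.

(* Both layer maps send token sequences with rows in the unit ball to such
   sequences, and TF is a pairing with H, whose rows have norm at most c/m; so
   it suffices that one layer is (1 + G) e^G-Lipschitz for the (2,1)-norm.  The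
   MLP acts row-wise by contractions.  For attention, pair the outputs along the
   segment S + tD with unit vectors U dual to the output difference and apply
   the mean value theorem.  The derivative of the softmax average is a
   covariance term, at most G/2 |D_i| times the attention variance T_i of the
   tokens, plus at most (1 + G) sum_j p_ij |D_j|.  After exchanging sums it
   remains to show (1 + G) sum_i p_ik + G/2 T_k <= (1 + G) e^G for each token k.
   Jensen's inequality against the mean token zb gives
   p_ij <= exp <W z_i, z_j - zb> / m, and convexity of exp on [-rho, rho],
   rho = G (1 + |zb|) / 2, bounds both quantities by functions of |zb| alone;
   a one-variable inequality for exp closes the argument.
   The value +-c is attained with W = 0, V = M = 1, all tokens equal to a unit
   vector e and all rows of H equal to +-(c/m) e. *)

Set Implicit Arguments. Unset Strict Implicit. Unset Printing Implicit Defensive.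

Section Dot.
Context {R : realType} {n : nat}.
Implicit Types (u v w : 'rV[R]_n) (a : R).

Definition dot u v : R := \sum_k u 0 k * v 0 k.

Lemma dotC u v : dot u v = dot v u.
Proof. by apply: eq_bigr => k _; rewrite mulrC. Qed.

Lemma dotDl u v w : dot (u + v) w = dot u w + dot v w.
Proof. by rewrite /dot -big_split; apply: eq_bigr => k _; rewrite mxE mulrDl. Qed.

Lemma dotZl a u w : dot (a *: u) w = a * dot u w.
Proof. by rewrite /dot mulr_sumr; apply: eq_bigr => k _; rewrite mxE mulrA. Qed.

Lemma dotNl u w : dot (- u) w = - dot u w.
Proof. by rewrite -scaleN1r dotZl mulN1r. Qed.

Lemma dotBl u v w : dot (u - v) w = dot u w - dot v w.
Proof. by rewrite dotDl dotNl. Qed.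

Lemma dotDr u v w : dot w (u + v) = dot w u + dot w v.
Proof. by rewrite dotC dotDl !(dotC w). Qed.

Lemma dotZr a u w : dot w (a *: u) = a * dot w u.
Proof. by rewrite dotC dotZl dotC. Qed.

Lemma dotNr u w : dot w (- u) = - dot w u.
Proof. by rewrite dotC dotNl dotC. Qed.

Lemma dotBr u v w : dot w (u - v) = dot w u - dot w v.
Proof. by rewrite dotC dotBl !(dotC w). Qed.

Lemma dot0l w : dot 0 w = 0.
Proof. by rewrite /dot big1 // => k _; rewrite mxE mul0r. Qed.

Lemma dot0r w : dot w 0 = 0.
Proof. by rewrite dotC dot0l. Qed.

Lemma dot_suml (I : Type) (r : seq I) (P : pred I) (F : I -> 'rV[R]_n) w :
  dot (\sum_(i <- r | P i) F i) w = \sum_(i <- r | P i) dot (F i) w.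
Proof.
rewrite /dot; under eq_bigr => k _ do rewrite summxE mulr_suml.
by rewrite exchange_big.
Qed.

Lemma dot_sumr (I : Type) (r : seq I) (P : pred I) (F : I -> 'rV[R]_n) w :
  dot w (\sum_(i <- r | P i) F i) = \sum_(i <- r | P i) dot w (F i).
Proof. by rewrite dotC dot_suml; apply: eq_bigr => i _; rewrite dotC. Qed.

Lemma dotrr_ge0 u : 0 <= dot u u.
Proof. by apply: sumr_ge0 => k _; rewrite -expr2 sqr_ge0. Qed.

Lemma dotrr_eq0 u : dot u u = 0 -> u = 0.
Proof.
move=> u0; apply/rowP => k; rewrite mxE.
have sq_ge0 (i : 'I_n) : xpredT i -> 0 <= u 0 i * u 0 i by rewrite -expr2 sqr_ge0.
have /eqP := @psumr_eq0P _ _ xpredT _ sq_ge0 u0 k isT.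
by rewrite mulf_eq0 orbb => /eqP.
Qed.

Lemma norm2E u : norm2 u = Num.sqrt (dot u u).
Proof. by congr Num.sqrt; apply: eq_bigr => k _; rewrite expr2. Qed.

Lemma norm2_ge0 u : 0 <= norm2 u.
Proof. exact: sqrtr_ge0. Qed.

Lemma sqr_norm2 u : norm2 u ^+ 2 = dot u u.
Proof. by rewrite norm2E sqr_sqrtr // dotrr_ge0. Qed.

Lemma norm2_eq0 u : norm2 u = 0 -> u = 0.
Proof. by move=> u0; apply: dotrr_eq0; rewrite -sqr_norm2 u0 expr0n. Qed.

Lemma norm2_gt0 u : u != 0 -> 0 < norm2 u.
Proof. by move=> u0; rewrite lt_def norm2_ge0 andbT; apply: contra_neq u0 => /norm2_eq0. Qed.

Lemma norm2_0 : norm2 (0 : 'rV[R]_n) = 0.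
Proof. by rewrite norm2E dot0l sqrtr0. Qed.

Lemma norm2Z a u : norm2 (a *: u) = `|a| * norm2 u.
Proof.
by rewrite !norm2E dotZl dotZr mulrA sqrtrM -?expr2 ?sqrtr_sqr ?sqr_ge0.
Qed.

Lemma norm2N u : norm2 (- u) = norm2 u.
Proof. by rewrite -scaleN1r norm2Z normrN1 mul1r. Qed.

Lemma norm2_distC u v : norm2 (u - v) = norm2 (v - u).
Proof. by rewrite -norm2N opprB. Qed.

Lemma dot_le_norm2 u v : dot u v <= norm2 u * norm2 v.
Proof.
have [->|u0] := eqVneq u 0; first by rewrite dot0l norm2_0 mul0r.
have [->|v0] := eqVneq v 0; first by rewrite dot0r norm2_0 mulr0.
set a := norm2 u; set b := norm2 v.
have ab0 : 0 < a * b by rewrite mulr_gt0 ?norm2_gt0.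
have := dotrr_ge0 (b *: u - a *: v).
rewrite !(dotBl, dotBr, dotZl, dotZr) (dotC v u) -!sqr_norm2 -/a -/b => sq_ge0.
have : a * b * dot u v <= a * b * (a * b) by nra.
by rewrite ler_pM2l.
Qed.

Lemma norm_dot_le u v : `|dot u v| <= norm2 u * norm2 v.
Proof.
rewrite ler_norml dot_le_norm2 andbT.
by have := dot_le_norm2 u (- v); rewrite dotNr norm2N; lra.
Qed.

Lemma norm2D_le u v : norm2 (u + v) <= norm2 u + norm2 v.
Proof.
have uv0 : 0 <= norm2 u + norm2 v by rewrite addr_ge0 ?norm2_ge0.
rewrite norm2E -(ger0_norm uv0) -sqrtr_sqr ler_sqrt ?sqr_ge0 //.
rewrite !(dotDl, dotDr) (dotC v u) -!sqr_norm2.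
by have := dot_le_norm2 u v; nra.
Qed.

Lemma norm2B_le u v : norm2 (u - v) <= norm2 u + norm2 v.
Proof. by rewrite -(norm2N v); exact: norm2D_le. Qed.

Lemma norm2_sum_le (I : Type) (r : seq I) (P : pred I) (F : I -> 'rV[R]_n) :
  norm2 (\sum_(i <- r | P i) F i) <= \sum_(i <- r | P i) norm2 (F i).
Proof.
elim/big_rec2: _ => [|i y1 y2 _ IH]; first by rewrite norm2_0.
exact: le_trans (norm2D_le _ _) (lerD (lexx _) IH).
Qed.

Lemma norm2_convex_le1 (I : finType) (p : I -> R) (z : I -> 'rV[R]_n) :
  (forall j, 0 <= p j) -> \sum_j p j = 1 -> (forall j, norm2 (z j) <= 1) ->
  norm2 (\sum_j p j *: z j) <= 1.
Proof.
move=> p0 p1 z1; apply: le_trans (norm2_sum_le _ _ _) _.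
rewrite -p1; apply: ler_sum => j _; rewrite norm2Z ger0_norm //.
by rewrite -[X in _ <= X]mulr1 ler_wpM2l.
Qed.

End Dot.

Section MatrixAction.
Context {R : realType} {n : nat}.
Implicit Types (A : 'M[R]_n) (x y : 'rV[R]_n).

Lemma mvD A x y : mv A (x + y) = mv A x + mv A y.
Proof. by rewrite /mv mulmxDl. Qed.

Lemma mvZ A a x : mv A (a *: x) = a *: mv A x.
Proof. by rewrite /mv scalemxAl. Qed.

Lemma mvB A x y : mv A (x - y) = mv A x - mv A y.
Proof. by rewrite /mv mulmxBl. Qed.

Lemma mv0 A : mv A 0 = 0.
Proof. by rewrite /mv mul0mx. Qed.

Lemma mv1 x : mv 1%:M x = x.
Proof. by rewrite /mv trmx1 mulmx1. Qed.

Lemma mv_sum A (I : Type) (r : seq I) (P : pred I) (F : I -> 'rV[R]_n) :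
  mv A (\sum_(i <- r | P i) F i) = \sum_(i <- r | P i) mv A (F i).
Proof. by rewrite /mv mulmx_suml. Qed.

Lemma mv_entry A x i : mv A x 0 i = dot x (row i A).
Proof. by rewrite /mv mxE; apply: eq_bigr => k _; rewrite !mxE. Qed.

(* The sup defining [opnorm] is over a set bounded by the Frobenius norm. *)
Lemma norm2_mv_le_opnorm A x : norm2 x <= 1 -> norm2 (mv A x) <= opnorm A.
Proof.
move=> x1; apply: ub_le_sup; last by exists x.
exists (Num.sqrt (\sum_i norm2 (row i A) ^+ 2)) => _ [y /= y1 <-].
rewrite /norm2 ler_wsqrtr //; apply: ler_sum => i _.
rewrite -/(norm2 (row i A)) mv_entry -real_normK ?num_real //.
rewrite lerXn2r ?nnegrE ?normr_ge0 ?norm2_ge0 //.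
apply: le_trans (norm_dot_le _ _) _.
by rewrite -[X in _ <= X]mul1r ler_wpM2r ?norm2_ge0.
Qed.

Lemma norm2_mv_le A a x : opnorm A <= a -> norm2 (mv A x) <= a * norm2 x.
Proof.
move=> Aa; have [->|x0] := eqVneq x 0; first by rewrite mv0 norm2_0 mulr0.
have nx := norm2_gt0 x0.
have ux : norm2 ((norm2 x)^-1 *: x) <= 1.
  by rewrite norm2Z ger0_norm ?invr_ge0 ?norm2_ge0 // mulVf ?gt_eqF.
have := le_trans (norm2_mv_le_opnorm A ux) Aa.
by rewrite mvZ norm2Z ger0_norm ?invr_ge0 ?norm2_ge0 // -ler_pdivrMr // mulrC.
Qed.

Lemma norm_dot_mv_le A a x y : opnorm A <= a -> `|dot (mv A x) y| <= a * norm2 x * norm2 y.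
Proof.
move=> Aa; apply: le_trans (norm_dot_le _ _) _.
by rewrite ler_wpM2r ?norm2_ge0 // norm2_mv_le.
Qed.

Lemma opnorm1_le1 : opnorm (1%:M : 'M[R]_n) <= 1.
Proof.
apply: ge_sup; first by exists (norm2 (mv 1%:M (0 : 'rV[R]_n))), 0 => //=; rewrite norm2_0.
by move=> _ [x x1 <-]; rewrite mv1.
Qed.

Lemma opnorm0_le a : 0 <= a -> opnorm (0 : 'M[R]_n) <= a.
Proof.
move=> a0; apply: ge_sup; first by exists (norm2 (mv 0 (0 : 'rV[R]_n))), 0 => //=; rewrite norm2_0.
by move=> _ [x _ <-]; rewrite /mv trmx0 mulmx0 norm2_0.
Qed.

End MatrixAction.

Section ExpInequalities.
Context {R : realType}.
Implicit Types (a b x y rho G r E Ei : R).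

Lemma expR_ge_tangent x y : expR x * (1 + (y - x)) <= expR y.
Proof.
have -> : expR y = expR x * expR (y - x) by rewrite -expRD addrC subrK.
by rewrite ler_wpM2l ?expR_ge1Dx // ltW // expR_gt0.
Qed.

Lemma expR_mean_le m (x : 'I_m -> R) :
  (0 < m)%N -> m%:R * expR ((m%:R)^-1 * \sum_l x l) <= \sum_l expR (x l).
Proof.
move=> m0; set xb := (m%:R)^-1 * \sum_l x l.
have m0' : (m%:R : R) != 0 by rewrite pnatr_eq0 -lt0n.
apply: le_trans (ler_sum _ (fun l _ => expR_ge_tangent xb (x l))).
rewrite -mulr_sumr big_split sumrB !sumr_const card_ord /=.
have -> : \sum_l x l = m%:R * xb by rewrite /xb mulrA mulfV // mul1r.
by rewrite -[1 *+ m]mulr_natl -[xb *+ m]mulr_natl mulr1 subrr addr0 mulrC.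
Qed.

Lemma expR_le_chord rho y : 0 < rho -> `|y| <= rho ->
  expR y <= ((rho + y) * expR rho + (rho - y) * expR (- rho)) / (2 * rho).
Proof.
move=> rho0; rewrite ler_norml => /andP[yl yr].
rewrite ler_pdivlMr ?mulr_gt0 //.
have h1 := ler_wpM2l (_ : 0 <= rho + y) (expR_ge_tangent y rho).
have h2 := ler_wpM2l (_ : 0 <= rho - y) (expR_ge_tangent y (- rho)).
have -> : expR y * (2 * rho) = (rho + y) * (expR y * (1 + (rho - y)))
    + (rho - y) * (expR y * (1 + (- rho - y))) by ring.
by have := h1 ltac:(lra); have := h2 ltac:(lra); lra.
Qed.

Lemma expR_gap_ge rho : 0 <= rho ->
  2 * rho * (2 * expR rho - 1) <= (1 + rho) ^+ 2 * expR rho - (1 + rho) * expR (- rho).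
Proof.
move=> rho0; set E := expR rho; set Ei := expR (- rho).
have E0 : 0 < E by exact: expR_gt0.
have EEi : E * Ei = 1 by rewrite -expRD subrr expR0.
have E1 : 1 + rho <= E by exact: expR_ge1Dx.
have E2 : 1 + 2 * rho <= E * E by rewrite -expRD; have := expR_ge1Dx (rho + rho); lra.
rewrite -subr_ge0 -(pmulr_rge0 _ E0).
have -> : E * ((1 + rho) ^+ 2 * E - (1 + rho) * Ei - 2 * rho * (2 * E - 1))
    = (1 - rho) ^+ 2 * (E * E) + 2 * rho * E - (1 + rho) * (E * Ei) by ring.
rewrite EEi.
have h1 : (1 - rho) ^+ 2 * (1 + 2 * rho) <= (1 - rho) ^+ 2 * (E * E).
  by rewrite ler_wpM2l ?sqr_ge0.
have h2 : 2 * rho * (1 + rho) <= 2 * rho * E by rewrite ler_wpM2l //; lra.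
have h3 : 0 <= rho * (1 - rho + 2 * rho ^+ 2).
  by apply: mulr_ge0 => //; nra.
have h4 : (1 - rho) ^+ 2 * (1 + 2 * rho) + 2 * rho * (1 + rho) - (1 + rho) * 1
    = rho * (1 - rho + 2 * rho ^+ 2) by ring.
lra.
Qed.

Lemma expR_gap_ler a b E Ei : 0 <= a <= b -> 1 <= E -> Ei <= 1 ->
  (1 + a) ^+ 2 * E - (1 + a) * Ei <= (1 + b) ^+ 2 * E - (1 + b) * Ei.
Proof.
move=> /andP[a0 ab] E1 Ei1; rewrite -subr_ge0.
have -> : (1 + b) ^+ 2 * E - (1 + b) * Ei - ((1 + a) ^+ 2 * E - (1 + a) * Ei)
    = (b - a) * ((2 + a + b) * E - Ei) by ring.
apply: mulr_ge0; first lra.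
have : 2 + a + b <= (2 + a + b) * E by rewrite ler_peMr //; lra.
lra.
Qed.

(* With [rho = G (1 + r) / 2] and [s = (1 - r) / 2] we have [G = rho + G s]; after
   [expR (G s) >= 1 + G s] the gap is [s] times a quantity that [expR_gap_ge] and
   [expR_gap_ler] show to be nonnegative. *)
Lemma attention_budget_ineq G r : 0 < G -> 0 <= r <= 1 ->
  (1 + G) * (((1 + r) * expR (G * (1 + r) / 2) + (1 - r) * expR (- (G * (1 + r) / 2))) / 2)
  + G / 2 * ((1 - r ^+ 2) * (2 * expR (G * (1 + r) / 2) - 1))
  <= (1 + G) * expR G.
Proof.
move=> G0 /andP[r0 r1].
set rho := G * (1 + r) / 2; set s := (1 - r) / 2.
set E := expR rho; set Ei := expR (- rho).
have rho0 : 0 <= rho by rewrite /rho; apply: divr_ge0 => //; apply: mulr_ge0; lra.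
have s0 : 0 <= s by rewrite /s; lra.
have rhoG : rho <= G.
  have -> : rho = G - G * (1 - r) / 2 by rewrite /rho; field.
  by rewrite gerBl divr_ge0 // mulr_ge0 //; lra.
have E0 : 0 < E by exact: expR_gt0.
have E1 : 1 <= E by rewrite /E -expR0 ler_expR.
have Ei1 : Ei <= 1 by rewrite /Ei -expR0 ler_expR; lra.
have expG : (1 + G) * (E * (1 + G * s)) <= (1 + G) * expR G.
  have -> : expR G = E * expR (G * s) by rewrite -expRD /rho /s; congr expR; field.
  by rewrite ler_wpM2l ?ler_wpM2l ?expR_ge1Dx //; lra.
have rhoGb : 0 <= rho <= G by rewrite rho0 rhoG.
have gap := le_trans (expR_gap_ge rho0) (expR_gap_ler rhoGb E1 Ei1).
have sgap : 0 <= s * ((1 + G) ^+ 2 * E - (1 + G) * Ei - 2 * rho * (2 * E - 1)).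
  by apply: mulr_ge0 => //; rewrite subr_ge0.
suff : (1 + G) * (((1 + r) * E + (1 - r) * Ei) / 2)
  + G / 2 * ((1 - r ^+ 2) * (2 * E - 1))
  = (1 + G) * (E * (1 + G * s))
    - s * ((1 + G) ^+ 2 * E - (1 + G) * Ei - 2 * rho * (2 * E - 1)).
  by move=> ->; lra.
by rewrite /rho /s; field.
Qed.

Lemma mean_expR_le_chord m (y : 'I_m -> R) rho r : (0 < m)%N -> 0 < rho ->
  (forall i, `|y i| <= rho) -> \sum_i y i <= m%:R * (r * rho) ->
  \sum_i expR (y i) / m%:R <= ((1 + r) * expR rho + (1 - r) * expR (- rho)) / 2.
Proof.
move=> m0 rho0 y_rho sum_y; set E := expR rho; set Ei := expR (- rho).
have mr0 : (0 : R) < m%:R by rewrite ltr0n.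
have EiE : Ei <= E by rewrite ler_expR; lra.
apply: le_trans (_ : \sum_i ((E + Ei) / (2 * m%:R)
    + (E - Ei) / (2 * rho * m%:R) * y i) <= _).
  apply: ler_sum => i _; apply: le_trans (_ : ((rho + y i) * E
      + (rho - y i) * Ei) / (2 * rho) / m%:R <= _).
    by rewrite ler_pM2r ?invr_gt0 // expR_le_chord.
  by rewrite le_eqVlt; apply/orP; left; apply/eqP; field; rewrite ?gt_eqF.
rewrite big_split /= sumr_const card_ord -mulr_sumr -[_ *+ m]mulr_natl.
apply: le_trans (_ : m%:R * ((E + Ei) / (2 * m%:R))
    + (E - Ei) / (2 * rho * m%:R) * (m%:R * (r * rho)) <= _).
  by rewrite lerD2l ler_wpM2l // divr_ge0 ?subr_ge0 // ?mulr_ge0 // ltW.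
by rewrite le_eqVlt; apply/orP; left; apply/eqP; field; rewrite ?gt_eqF.
Qed.

End ExpInequalities.

Section WeightedMean.
Context {R : realType} {n : nat} {I : finType} (p : I -> R) (z : I -> 'rV[R]_n).
Hypothesis sum_p1 : \sum_j p j = 1.

Lemma dot_wmeanl w : dot (\sum_j p j *: z j) w = \sum_j p j * dot (z j) w.
Proof. by rewrite dot_suml; apply: eq_bigr => j _; rewrite dotZl. Qed.

Lemma wvariance_eq (mu := \sum_j p j *: z j) :
  \sum_j p j * norm2 (z j - mu) ^+ 2 = \sum_j p j * dot (z j) (z j) - dot mu mu.
Proof.
have expand j : p j * norm2 (z j - mu) ^+ 2 =
    p j * dot (z j) (z j) - 2 * (p j * dot (z j) mu) + p j * dot mu mu.
  by rewrite sqr_norm2 !(dotBl, dotBr) (dotC mu (z j)); ring.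
rewrite (eq_bigr _ (fun j _ => expand j)) big_split sumrB /=.
by rewrite -mulr_sumr -mulr_suml -dot_wmeanl sum_p1; ring.
Qed.

End WeightedMean.

Section Attention.
Context {R : realType} {m d : nat} (W : 'M[R]_d) (S : 'M[R]_(m, d)).

Definition score (i j : 'I_m) : R := dot (mv W (row i S)) (row j S).

Definition attn (i j : 'I_m) : R := expR (score i j) / \sum_l expR (score i l).

Definition attn_mean (i : 'I_m) : 'rV[R]_d := \sum_j attn i j *: row j S.

Definition row_mean : 'rV[R]_d := (m%:R)^-1 *: \sum_j row j S.

Lemma sum_expR_score_gt0 i : 0 < \sum_l expR (score i l).
Proof.
rewrite (bigD1 i) //= ltr_pwDl ?expR_gt0 //.
by apply: sumr_ge0 => l _; exact/ltW/expR_gt0.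
Qed.

Lemma attn_ge0 i j : 0 <= attn i j.
Proof. by rewrite divr_ge0 // ltW ?expR_gt0 ?sum_expR_score_gt0. Qed.

Lemma sum_attn i : \sum_j attn i j = 1.
Proof. by rewrite -mulr_suml mulfV // gt_eqF // sum_expR_score_gt0. Qed.

Lemma row_att V i : row i (att W V S) = \sum_j attn i j *: mv V (row j S).
Proof.
apply/rowP => k; rewrite mxE summxE mxE; apply: eq_bigr => j _.
rewrite !mxE /attn /score /dot /mv; congr (expR _ / _ * _).
- by apply: eq_bigr => l _; rewrite [(row j S)^T _ _]mxE.
- apply: eq_bigr => l _; rewrite !mxE; congr expR.
  by apply: eq_bigr => l' _; rewrite [(row l S)^T _ _]mxE.
Qed.

Hypothesis m_gt0 : (0 < m)%N.

Lemma sum_rows_mean : \sum_j row j S = m%:R *: row_mean.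
Proof. by rewrite /row_mean scalerA mulfV ?scale1r // pnatr_eq0 -lt0n. Qed.

(* Jensen's inequality bounds the softmax denominator below by
   [m expR (score against the mean token)]. *)
Lemma attn_le_centered i j :
  attn i j <= expR (dot (mv W (row i S)) (row j S - row_mean)) / m%:R.
Proof.
have mr0 : (0 : R) < m%:R by rewrite ltr0n.
have := expR_mean_le (score i) m_gt0.
have -> : (m%:R)^-1 * \sum_l score i l = dot (mv W (row i S)) row_mean.
  by rewrite /row_mean dotZr dot_sumr.
move=> jensen; rewrite /attn ler_pdivrMr ?sum_expR_score_gt0 //.
apply: le_trans (ler_wpM2l _ jensen); last by rewrite divr_ge0 ?ltW ?expR_gt0.
by rewrite mulrA divfK ?gt_eqF // -expRD dotBr subrK.
Qed.

Hypothesis S_valid : valid_input S.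

Lemma attn_mean_norm_le1 i : norm2 (attn_mean i) <= 1.
Proof. exact: norm2_convex_le1 (attn_ge0 i) (sum_attn i) S_valid. Qed.

Lemma row_mean_norm_le1 : norm2 row_mean <= 1.
Proof.
rewrite /row_mean scaler_sumr; apply: norm2_convex_le1 S_valid.
- by move=> j; rewrite invr_ge0 ler0n.
- by rewrite sumr_const card_ord -[_ *+ m]mulr_natr mulVf // pnatr_eq0 -lt0n.
Qed.

Variable G : R.
Hypotheses (G_gt0 : 0 < G) (W_le : opnorm W <= G / 2).

Let G2_ge0 : 0 <= G / 2. Proof. by rewrite divr_ge0 // ltW. Qed.

Let r := norm2 row_mean.
Let rho := G * (1 + r) / 2.

Lemma score_centered_le i k : `|dot (mv W (row i S)) (row k S - row_mean)| <= rho.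
Proof.
apply: le_trans (norm_dot_mv_le _ _ W_le) _.
have -> : rho = G / 2 * 1 * (1 + r) by rewrite /rho; field.
apply: ler_pM; rewrite ?norm2_ge0 //.
- exact: mulr_ge0 G2_ge0 (norm2_ge0 _).
- by apply: ler_wpM2l => //; exact: S_valid.
- by apply: le_trans (norm2B_le _ _) _; rewrite lerD2r.
Qed.

Lemma attn_colsum_le k :
  \sum_i attn i k <= ((1 + r) * expR rho + (1 - r) * expR (- rho)) / 2.
Proof.
have r0 : 0 <= r := norm2_ge0 _.
apply: le_trans (ler_sum _ (fun i _ => attn_le_centered i k)) _.
apply: mean_expR_le_chord => //; first by rewrite /rho divr_gt0 ?mulr_gt0 //; lra.
- by move=> i; exact: score_centered_le.
rewrite -dot_suml -mv_sum sum_rows_mean mvZ dotZl ler_wpM2l ?ler0n //.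
apply: le_trans (dot_le_norm2 _ _) _.
have -> : r * rho = G / 2 * r * (1 + r) by rewrite /rho; field.
apply: ler_pM; rewrite ?norm2_ge0 ?norm2_mv_le //.
by apply: le_trans (norm2B_le _ _) _; rewrite lerD2r S_valid.
Qed.

(* The variance is at most [1 - |mu|^2 <= 2 (1 - <mu, zb>) - (1 - r^2)], and
   [1 - <mu, zb>] is controlled by the bound [E / m] on the weights. *)
Lemma attn_variance_le k :
  \sum_j attn k j * norm2 (row j S - attn_mean k) ^+ 2 <= (1 - r ^+ 2) * (2 * expR rho - 1).
Proof.
have mr0 : (0 : R) < m%:R by rewrite ltr0n.
rewrite wvariance_eq ?sum_attn // -/(attn_mean k).
set p := attn k; set mu := attn_mean k; set zb := row_mean; set E := expR rho.
have p0 j : 0 <= p j by exact: attn_ge0.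
have sum_p : \sum_j p j = 1 by exact: sum_attn.
have sq_le1 j : dot (row j S) (row j S) <= 1.
  by rewrite -sqr_norm2 -(expr1n _ 2) lerXn2r ?nnegrE ?norm2_ge0 ?S_valid.
have second_moment_le1 : \sum_j p j * dot (row j S) (row j S) <= 1.
  by rewrite -sum_p; apply: ler_sum => j _; rewrite ler_piMr.
have mu_sq_ge : 2 * dot mu zb - r ^+ 2 <= dot mu mu.
  have := dotrr_ge0 (mu - zb).
  have zb_sq : dot zb zb = r ^+ 2 by rewrite -sqr_norm2.
  by rewrite !(dotBl, dotBr) (dotC zb mu) zb_sq; lra.
have p_le j : p j <= E / m%:R.
  apply: le_trans (attn_le_centered k j) _; rewrite ler_pM2r ?invr_gt0 // ler_expR.
  exact: le_trans (ler_norm _) (score_centered_le k j).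
have dot_zb_le1 j : 0 <= 1 - dot (row j S) zb.
  rewrite subr_ge0; apply: le_trans (dot_le_norm2 _ _) _.
  by rewrite mulr_ile1 ?norm2_ge0 ?S_valid ?row_mean_norm_le1.
have mu_zb_gap_le : 1 - dot mu zb <= E * (1 - r ^+ 2).
  have -> : 1 - dot mu zb = \sum_j p j * (1 - dot (row j S) zb).
    rewrite dot_wmeanl -[X in X - _]sum_p -sumrB.
    by apply: eq_bigr => j _; rewrite /p; ring.
  apply: le_trans (_ : \sum_j E / m%:R * (1 - dot (row j S) zb) <= _).
    by apply: ler_sum => j _; apply: ler_wpM2r.
  rewrite -mulr_sumr sumrB sumr_const card_ord -dot_suml sum_rows_mean dotZl.
  by rewrite -/zb -sqr_norm2 -/r -{2}[m%:R]mulr1 -mulrBr mulrA divfK ?gt_eqF.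
lra.
Qed.

Lemma attn_col_variance_le k :
  (1 + G) * \sum_i attn i k + G / 2 * \sum_j attn k j * norm2 (row j S - attn_mean k) ^+ 2
  <= (1 + G) * expR G.
Proof.
have r01 : 0 <= r <= 1 by rewrite norm2_ge0 row_mean_norm_le1.
apply: le_trans (attention_budget_ineq G_gt0 r01); apply: lerD.
  by rewrite ler_wpM2l ?attn_colsum_le // addr_ge0 // ltW.
by rewrite ler_wpM2l ?attn_variance_le.
Qed.

End Attention.

Section CenteredSums.
Context {R : realType} {m : nat}.
Implicit Types (p f g A B c : 'I_m -> R) (x y : R).

Lemma wsum_centered1 p f g x :
  \sum_j p j * (f j - x) * g j = \sum_j p j * f j * g j - x * \sum_j p j * g j.
Proof. by rewrite mulr_sumr -sumrB; apply: eq_bigr => j _; ring. Qed.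

Lemma wsum_centered2 p f g x y :
  \sum_j p j * (f j - x) * (g j - y) =
  \sum_j p j * f j * g j - y * \sum_j p j * f j - x * \sum_j p j * g j + x * y * \sum_j p j.
Proof. by rewrite !mulr_sumr -!sumrB -big_split /=; apply: eq_bigr => j _; ring. Qed.

Lemma wsum_centeredD p A B c : \sum_j p j = 1 ->
  \sum_j p j * ((A j + B j) - \sum_l p l * (A l + B l)) * c j
  = \sum_j p j * (A j - \sum_l p l * A l) * (c j - \sum_l p l * c l)
    + \sum_j p j * B j * (c j - \sum_l p l * c l).
Proof.
move=> sum_p1.
have meanD : \sum_l p l * (A l + B l) = \sum_l p l * A l + \sum_l p l * B l.
  by rewrite -big_split /=; apply: eq_bigr => l _; ring.
have sumD : \sum_j p j * (A j + B j) * c j = \sum_j p j * A j * c j + \sum_j p j * B j * c j.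
  by rewrite -big_split /=; apply: eq_bigr => j _; ring.
have centerB : \sum_j p j * B j * (c j - \sum_l p l * c l)
    = \sum_j p j * B j * c j - (\sum_l p l * c l) * \sum_j p j * B j.
  by rewrite mulr_sumr -sumrB; apply: eq_bigr => j _; ring.
rewrite meanD wsum_centered1 wsum_centered2 sum_p1 centerB sumD.
move: (\sum_j p j * A j * c j) (\sum_j p j * B j * c j) (\sum_l p l * A l)
  (\sum_l p l * B l) (\sum_l p l * c l) => a b x y z.
ring.
Qed.

End CenteredSums.

Section AttentionDerivative.
Context {R : realType} {m d : nat} (W V : 'M[R]_d) (S D U : 'M[R]_(m, d)).

Definition dscore (i j : 'I_m) : R :=
  dot (mv W (row i D)) (row j S) + dot (mv W (row i S)) (row j D).

Definition vpair (X : 'M[R]_(m, d)) (i j : 'I_m) : R := dot (row i U) (mv V (row j X)).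

Definition att_deriv : R :=
  \sum_i \sum_j (attn W S i j * (dscore i j - \sum_l attn W S i l * dscore i l) * vpair S i j
                 + attn W S i j * vpair D i j).

Variable G : R.
Hypotheses (G_gt0 : 0 < G) (S_valid : valid_input S).
Hypotheses (W_le : opnorm W <= G / 2) (V_le1 : opnorm V <= 1).
Hypothesis U_le1 : forall i, norm2 (row i U) <= 1.

Let vpair_le i x : `|dot (row i U) (mv V x)| <= norm2 x.
Proof.
apply: le_trans (norm_dot_le _ _) _; rewrite -[X in _ <= X]mul1r.
by apply: ler_pM; rewrite ?norm2_ge0 // -[X in _ <= X]mul1r norm2_mv_le.
Qed.

Let mulr_le_norm (a b x y : R) : `|a| <= x -> `|b| <= y -> a * b <= x * y.
Proof.
move=> ax yb; apply: le_trans (ler_norm _) _; rewrite normrM.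
by apply: ler_pM; rewrite ?normr_ge0.
Qed.

(* By [wsum_centeredD], moving the query [row i S] contributes a covariance under
   the softmax weights, bounded through the attention variance, while moving the
   keys contributes terms of size [G |D_j|]. *)
Lemma att_deriv_row_le i :
  \sum_j (attn W S i j * (dscore i j - \sum_l attn W S i l * dscore i l) * vpair S i j
          + attn W S i j * vpair D i j)
  <= G / 2 * norm2 (row i D) * \sum_j attn W S i j * norm2 (row j S - attn_mean W S i) ^+ 2
     + (1 + G) * \sum_j attn W S i j * norm2 (row j D).
Proof.
set p := attn W S i; set mu := attn_mean W S i.
have p0 j : 0 <= p j by exact: attn_ge0.
have G2 : 0 <= G / 2 by rewrite divr_ge0 // ltW.
rewrite big_split /= /dscore (wsum_centeredD _ _ _ (sum_attn W S i)) -/p.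
have meanA : \sum_l p l * dot (mv W (row i D)) (row l S) = dot (mv W (row i D)) mu.
  by rewrite /mu /attn_mean dot_sumr; apply: eq_bigr => l _; rewrite dotZr.
have meanc : \sum_l p l * vpair S i l = dot (row i U) (mv V mu).
  by rewrite /mu /attn_mean mv_sum dot_sumr; apply: eq_bigr => l _; rewrite mvZ dotZr.
have dev_le2 j : norm2 (row j S - mu) <= 2.
  apply: le_trans (norm2B_le _ _) _.
  by have := S_valid j; have := attn_mean_norm_le1 W S_valid i; lra.
have cov_le : \sum_j p j * (dot (mv W (row i D)) (row j S) - dot (mv W (row i D)) mu)
      * (vpair S i j - dot (row i U) (mv V mu))
    <= G / 2 * norm2 (row i D) * \sum_j p j * norm2 (row j S - mu) ^+ 2.
  rewrite mulr_sumr; apply: ler_sum => j _.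
  set e := norm2 (row j S - mu).
  have -> : G / 2 * norm2 (row i D) * (p j * e ^+ 2) = p j * (G / 2 * norm2 (row i D) * e * e).
    by ring.
  rewrite -mulrA; apply: ler_wpM2l => //; apply: mulr_le_norm; first by rewrite -dotBr norm_dot_mv_le.
  by rewrite /vpair -dotBr -mvB vpair_le.
have key_le : \sum_j p j * dot (mv W (row i S)) (row j D) * (vpair S i j - dot (row i U) (mv V mu))
    <= G * \sum_j p j * norm2 (row j D).
  rewrite mulr_sumr; apply: ler_sum => j _.
  have -> : G * (p j * norm2 (row j D)) = p j * (G / 2 * 1 * norm2 (row j D) * 2) by field.
  rewrite -mulrA; apply: ler_wpM2l => //; apply: mulr_le_norm.
    apply: le_trans (norm_dot_mv_le _ _ W_le) _.
    by rewrite ler_wpM2r ?norm2_ge0 // ler_wpM2l.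
  by apply: le_trans (dev_le2 j); rewrite /vpair -dotBr -mvB vpair_le.
have value_le : \sum_j p j * vpair D i j <= \sum_j p j * norm2 (row j D).
  apply: ler_sum => j _; apply: ler_wpM2l => //.
  exact: le_trans (ler_norm _) (vpair_le _ _).
rewrite meanA meanc; lra.
Qed.

Hypothesis m_gt0 : (0 < m)%N.

(* Summing the row bounds and exchanging the order of summation, the factor in
   front of [norm2 (row k D)] is the one of [attn_col_variance_le]. *)
Lemma att_deriv_le : att_deriv <= (1 + G) * expR G * norm21 D.
Proof.
apply: le_trans (ler_sum _ (fun i _ => att_deriv_row_le i)) _.
rewrite big_split /=.
have -> : \sum_i (1 + G) * \sum_j attn W S i j * norm2 (row j D)
    = \sum_k norm2 (row k D) * ((1 + G) * \sum_i attn W S i k).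
  transitivity (\sum_i \sum_j (1 + G) * (attn W S i j * norm2 (row j D))).
    by apply: eq_bigr => i _; rewrite mulr_sumr.
  rewrite exchange_big; apply: eq_bigr => k _.
  by rewrite !mulr_sumr; apply: eq_bigr => i _; ring.
rewrite /norm21 mulr_sumr -big_split /=; apply: ler_sum => k _.
have := ler_wpM2l (norm2_ge0 (row k D)) (attn_col_variance_le m_gt0 S_valid G_gt0 W_le k).
lra.
Qed.

End AttentionDerivative.

Section Derivatives.
Context {R : realType}.

Lemma is_derive_bigsum n (h : 'I_n -> R -> R) (dh : 'I_n -> R) (t : R) :
  (forall i, is_derive t 1 (h i) (dh i)) ->
  is_derive t 1 (fun x => \sum_i h i x) (\sum_i dh i).
Proof.
move=> dh_h; have -> : (fun x => \sum_i h i x) = \sum_i h i.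
  by apply/funext => x; rewrite fct_sumE.
exact: is_derive_sum.
Qed.

Lemma is_derive1M (f g : R -> R) (df dg t : R) :
  is_derive t 1 f df -> is_derive t 1 g dg ->
  is_derive t 1 (fun x => f x * g x) (f t * dg + g t * df).
Proof. exact: is_deriveM. Qed.

Lemma is_derive1V (f : R -> R) (df t : R) : f t != 0 -> is_derive t 1 f df ->
  is_derive t 1 (fun x => (f x)^-1) (- (f t) ^- 2 * df).
Proof. exact: is_deriveV. Qed.

Lemma is_derive_dot_line n (x y x' y' : 'rV[R]_n) (t : R) :
  is_derive t 1 (fun s => dot (x + s *: y) (x' + s *: y'))
    (dot y (x' + t *: y') + dot (x + t *: y) y').
Proof.
have line (a b : R) : is_derive t 1 (fun s => a + s * b) b.
  apply: is_derive_eq (is_deriveD (is_derive_cst a t 1)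
    (is_derive1M (is_derive_id t 1) (is_derive_cst b t 1))) _.
  by rewrite mulr0 mulr1 !add0r.
have -> : (fun s => dot (x + s *: y) (x' + s *: y')) =
          (fun s => \sum_k (x 0 k + s * y 0 k) * (x' 0 k + s * y' 0 k)).
  by apply/funext => s; apply: eq_bigr => k _; rewrite !mxE.
apply: is_derive_eq (is_derive_bigsum (fun k => is_derive1M (line _ _) (line _ _))) _.
rewrite /dot -big_split /=; apply: eq_bigr => k _; rewrite !mxE; ring.
Qed.

Lemma is_derive_softmax_avg m (s c : 'I_m -> R -> R) (ds dc : 'I_m -> R) (t : R) :
  (forall j, is_derive t 1 (s j) (ds j)) -> (forall j, is_derive t 1 (c j) (dc j)) ->
  is_derive t 1 (fun x => \sum_j expR (s j x) / (\sum_l expR (s l x)) * c j x)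
    (\sum_j (expR (s j t) / (\sum_l expR (s l t))
                * (ds j - \sum_l expR (s l t) / (\sum_k expR (s k t)) * ds l) * c j t
              + expR (s j t) / (\sum_l expR (s l t)) * dc j)).
Proof.
move=> ds_s dc_c; apply: is_derive_bigsum => j.
set Z := \sum_l expR (s l t).
have Z0 : Z != 0.
  rewrite gt_eqF // /Z (bigD1 j) //= ltr_pwDl ?expR_gt0 //.
  by apply: sumr_ge0 => l _; exact/ltW/expR_gt0.
have dexp l : is_derive t 1 (fun x => expR (s l x)) (expR (s l t) * ds l).
  exact: is_derive1_comp.
have dZ := is_derive1V Z0 (is_derive_bigsum dexp).
apply: is_derive_eq (is_derive1M (is_derive1M (dexp j) dZ) (dc_c j)) _.
have -> : \sum_l expR (s l t) / Z * ds l = (\sum_l expR (s l t) * ds l) / Z.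
  by rewrite mulr_suml; apply: eq_bigr => l _; ring.
by rewrite -/Z; field.
Qed.

End Derivatives.

Section AttentionLipschitz.
Context {R : realType} {m d : nat}.
Implicit Types (W V : 'M[R]_d) (S D U X : 'M[R]_(m, d)).

Lemma exists_dual_rows X : exists U,
  (forall i, norm2 (row i U) <= 1) /\ forall i, dot (row i U) (row i X) = norm2 (row i X).
Proof.
exists (\matrix_i ((norm2 (row i X))^-1 *: row i X)).
have rowU i : row i (\matrix_i ((norm2 (row i X))^-1 *: row i X)) = (norm2 (row i X))^-1 *: row i X.
  by rewrite rowK.
split => i; rewrite rowU; have [X0|X0] := eqVneq (norm2 (row i X)) 0.
- by rewrite X0 invr0 scale0r norm2_0.
- by rewrite norm2Z ger0_norm ?invr_ge0 ?norm2_ge0 // mulVf.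
- by rewrite X0 invr0 scale0r dot0l.
- by rewrite dotZl -sqr_norm2 expr2 mulKf.
Qed.

Lemma valid_input_segment S (S' : 'M[R]_(m, d)) t : valid_input S -> valid_input S' -> 0 <= t <= 1 ->
  valid_input (S + t *: (S' - S)).
Proof.
move=> S1 S'1 /andP[t0 t1] j.
have -> : row j (S + t *: (S' - S)) = (1 - t) *: row j S + t *: row j S'.
  by apply/rowP => k; rewrite !mxE; ring.
apply: le_trans (norm2D_le _ _) _; rewrite !norm2Z !ger0_norm ?subr_ge0 //.
have := S1 j; have := S'1 j; have := norm2_ge0 (row j S); have := norm2_ge0 (row j S').
nra.
Qed.

Definition att_pairing W V S D U (t : R) : R :=
  \sum_i dot (row i U) (row i (att W V (S + t *: D))).

Lemma is_derive_att_pairing W V S D U (t : R) :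
  is_derive t 1 (att_pairing W V S D U) (att_deriv W V (S + t *: D) D U).
Proof.
have rowP x j : row j (S + x *: D) = row j S + x *: row j D by rewrite linearD linearZ.
have -> : att_pairing W V S D U = fun x => \sum_i \sum_j
    expR (score W (S + x *: D) i j) / (\sum_l expR (score W (S + x *: D) i l))
    * vpair V U (S + x *: D) i j.
  apply/funext => x; apply: eq_bigr => i _.
  by rewrite row_att dot_sumr; apply: eq_bigr => j _; rewrite dotZr.
apply: is_derive_bigsum => i; apply: is_derive_softmax_avg => j.
- have -> : (fun x => score W (S + x *: D) i j) = fun x =>
      dot (mv W (row i S) + x *: mv W (row i D)) (row j S + x *: row j D).
    by apply/funext => x; rewrite /score !rowP mvD mvZ.
  by apply: is_derive_eq (is_derive_dot_line _ _ _ _ t) _; rewrite /dscore !rowP mvD mvZ.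
- have -> : (fun x => vpair V U (S + x *: D) i j) = fun x =>
      dot (row i U + x *: 0) (mv V (row j S) + x *: mv V (row j D)).
    by apply/funext => x; rewrite /vpair rowP mvD mvZ scaler0 addr0.
  by apply: is_derive_eq (is_derive_dot_line _ _ _ _ t) _; rewrite dot0l add0r scaler0 addr0.
Qed.

Lemma norm21_distC (A B : 'M[R]_(m, d)) : norm21 (A - B) = norm21 (B - A).
Proof. by apply: eq_bigr => i _; rewrite !linearB norm2_distC. Qed.

Lemma att_pairing01 W V S (S' : 'M[R]_(m, d)) U :
  att_pairing W V S (S' - S) U 1 - att_pairing W V S (S' - S) U 0
  = \sum_i dot (row i U) (row i (att W V S' - att W V S)).
Proof.
rewrite /att_pairing -sumrB scale1r scale0r addr0 addrC subrK.
by apply: eq_bigr => i _; rewrite -dotBr linearB.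
Qed.

(* Mean value theorem along the segment from [S] to [S'], applied to the
   pairing of the attention outputs with unit vectors dual to their differences. *)
Lemma att_lipschitz W V S (S' : 'M[R]_(m, d)) (G : R) :
  (0 < m)%N -> 0 < G -> valid_input S -> valid_input S' ->
  opnorm W <= G / 2 -> opnorm V <= 1 ->
  norm21 (att W V S - att W V S') <= (1 + G) * expR G * norm21 (S - S').
Proof.
move=> m_gt0 G_gt0 S1 S'1 W_le V_le.
have [U [U1 U_dual]] := exists_dual_rows (att W V S' - att W V S).
set g := att_pairing W V S (S' - S) U.
have g_cont : {within `[0, 1], continuous g}%classic.
  by apply: derivable_within_continuous => x _; case: (is_derive_att_pairing W V S (S' - S) U x).
have [c c01 g_mvt] := MVT_segment ler01 (fun x _ => is_derive_att_pairing W V S (S' - S) U x) g_cont.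
rewrite subr0 mulr1 att_pairing01 in g_mvt.
have Sc1 : valid_input (S + c *: (S' - S)).
  by apply: valid_input_segment; rewrite // -in_itv.
rewrite norm21_distC (norm21_distC S) /norm21.
under eq_bigr => i _ do rewrite -U_dual.
by rewrite g_mvt; apply: att_deriv_le.
Qed.

End AttentionLipschitz.

Section Layers.
Context {R : realType}.

Lemma act_fun0 phi : act_fun phi (0 : R) = 0.
Proof. by case: phi => //=; rewrite maxxx. Qed.

Lemma act_fun_id phi (x : R) : 0 <= x -> act_fun phi x = x.
Proof. by case: phi => //= x0; rewrite max_l. Qed.

Lemma act_fun_sub_sqr_le phi (a b : R) : (act_fun phi a - act_fun phi b) ^+ 2 <= (a - b) ^+ 2.
Proof.
case: phi => //=; rewrite /Num.max.
case: ifP => [/ltW a0|/negbT]; case: ifP => [/ltW b0|/negbT]; rewrite -?leNgt => *;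
  rewrite ?subrr ?expr0n ?sqr_ge0 // ?sub0r ?subr0 ?sqrrN !expr2; nra.
Qed.

Lemma norm2_act_sub_le d phi (x y : 'rV[R]_d) :
  norm2 (\row_k act_fun phi (x 0 k) - \row_k act_fun phi (y 0 k)) <= norm2 (x - y).
Proof.
rewrite /norm2 ler_wsqrtr //; apply: ler_sum => k _; rewrite !mxE.
exact: act_fun_sub_sqr_le.
Qed.

Lemma norm2_act_le d phi (x : 'rV[R]_d) : norm2 (\row_k act_fun phi (x 0 k)) <= norm2 x.
Proof.
have := norm2_act_sub_le phi x 0.
have -> : \row_k act_fun phi ((0 : 'rV[R]_d) 0 k) = 0.
  by apply/rowP => k; rewrite !mxE act_fun0.
by rewrite !subr0.
Qed.

Lemma row_par_mlp m d phi (M : 'I_m -> 'M[R]_d) (X : 'M[R]_(m, d)) j :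
  row j (par_mlp phi M X) = \row_k act_fun phi (mv (M j) (row j X) 0 k).
Proof. by apply/rowP => k; rewrite !mxE. Qed.

Lemma att_valid_input m d (W V : 'M[R]_d) (S : 'M[R]_(m, d)) :
  opnorm V <= 1 -> valid_input S -> valid_input (att W V S).
Proof.
move=> V_le S1 i; rewrite row_att; apply: norm2_convex_le1.
- exact: attn_ge0.
- exact: sum_attn.
- by move=> j; apply: le_trans (norm2_mv_le _ V_le) _; rewrite mul1r.
Qed.

Lemma par_mlp_valid_input m d phi (M : 'I_m -> 'M[R]_d) (X : 'M[R]_(m, d)) :
  (forall j, opnorm (M j) <= 1) -> valid_input X -> valid_input (par_mlp phi M X).
Proof.
move=> M_le X1 j; rewrite row_par_mlp; apply: le_trans (norm2_act_le _ _) _.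
by apply: le_trans (norm2_mv_le _ (M_le j)) _; rewrite mul1r.
Qed.

Lemma par_mlp_lipschitz m d phi (M : 'I_m -> 'M[R]_d) (X Y : 'M[R]_(m, d)) :
  (forall j, opnorm (M j) <= 1) ->
  norm21 (par_mlp phi M X - par_mlp phi M Y) <= norm21 (X - Y).
Proof.
move=> M_le; apply: ler_sum => j _; rewrite !linearB /= !row_par_mlp.
apply: le_trans (norm2_act_sub_le _ _ _) _; rewrite -mvB.
by apply: le_trans (norm2_mv_le _ (M_le j)) _; rewrite mul1r.
Qed.

Lemma tf_layers_lipschitz m d L phi (G : R) (W V : nat -> 'M[R]_d)
    (M : nat -> 'I_m -> 'M[R]_d) (S S' : 'M[R]_(m, d)) :
  (0 < m)%N -> 0 < G ->
  (forall i, (i < L)%N ->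
     opnorm (V i) <= 1 /\ (forall j, opnorm (M i j) <= 1) /\ opnorm (W i) <= G / 2) ->
  valid_input S -> valid_input S' ->
  forall k, (k <= L)%N ->
  [/\ valid_input (tf_layers phi W V M k S), valid_input (tf_layers phi W V M k S') &
      norm21 (tf_layers phi W V M k S - tf_layers phi W V M k S')
        <= ((1 + G) * expR G) ^+ k * norm21 (S - S')].
Proof.
move=> m_gt0 G_gt0 weights_le S1 S'1; elim=> [|k IH] /= k_lt.
  by split => //; rewrite expr0 mul1r.
have [Sk1 S'k1 Sk_lip] := IH (ltnW k_lt).
have [V_le [M_le W_le]] := weights_le k k_lt.
split; try by apply: par_mlp_valid_input => //; exact: att_valid_input.
apply: le_trans (par_mlp_lipschitz _ _ _ M_le) _.
apply: le_trans (att_lipschitz m_gt0 G_gt0 Sk1 S'k1 W_le V_le) _.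
have K0 : 0 <= (1 + G) * expR G by rewrite mulr_ge0 ?expR_ge0 // addr_ge0 // ltW.
by move: K0; set K := (1 + G) * expR G => K0; rewrite exprS -mulrA ler_wpM2l.
Qed.

End Layers.

Section Transformer.
Context {R : realType} {m d : nat}.

Lemma norm2_row_le_norm2inf (H : 'M[R]_(m, d)) j : norm2 (row j H) <= norm2inf H.
Proof. exact: (le_bigmax (0 : R) (fun i => norm2 (row i H)) j). Qed.

Lemma inner_le_norm2inf_norm21 (H X : 'M[R]_(m, d)) :
  `|\sum_j \sum_k H j k * X j k| <= norm2inf H * norm21 X.
Proof.
rewrite /norm21 mulr_sumr; apply: le_trans (ler_norm_sum _ _ _) _.
apply: ler_sum => j _; have -> : \sum_k H j k * X j k = dot (row j H) (row j X).
  by apply: eq_bigr => k _; rewrite !mxE.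
apply: le_trans (norm_dot_le _ _) _.
by rewrite ler_wpM2r ?norm2_ge0 ?norm2_row_le_norm2inf.
Qed.

Lemma TF_lipschitz L phi (c G : R) (H : 'M[R]_(m, d)) W V M (S S' : 'M[R]_(m, d)) :
  (0 < m)%N -> 0 < G -> valid_weights L c G H W V M -> valid_input S -> valid_input S' ->
  `|TF phi L H W V M S - TF phi L H W V M S'|
    <= c / m%:R * ((1 + G) * expR G) ^+ L * norm21 (S - S').
Proof.
move=> m_gt0 G_gt0 [weights_le H_le] S1 S'1.
have [_ _ layers_lip] := tf_layers_lipschitz phi m_gt0 G_gt0 weights_le S1 S'1 (leqnn L).
have -> : TF phi L H W V M S - TF phi L H W V M S' = \sum_j \sum_k H j k *
    (tf_layers phi W V M L S - tf_layers phi W V M L S') j k.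
  rewrite /TF -sumrB; apply: eq_bigr => j _; rewrite -sumrB.
  by apply: eq_bigr => k _; rewrite !mxE mulrBr.
apply: le_trans (inner_le_norm2inf_norm21 _ _) _; rewrite -mulrA.
apply: ler_pM => //.
- exact: le_trans (norm2_ge0 (row (Ordinal m_gt0) H)) (norm2_row_le_norm2inf _ _).
- by apply: sumr_ge0 => j _; exact: norm2_ge0.
Qed.

Lemma TF_attains L phi (c G s : R) : (0 < m)%N -> (0 < d)%N -> 0 < G -> `|s| = c ->
  exists (H : 'M[R]_(m, d)) (W V : nat -> 'M[R]_d) (M : nat -> 'I_m -> 'M[R]_d)
         (S : 'M[R]_(m, d)),
    valid_weights L c G H W V M /\ valid_input S /\ TF phi L H W V M S = s.
Proof.
move=> m_gt0 d_gt0 G_gt0 s_c.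
have mr0 : (0 : R) < m%:R by rewrite ltr0n.
pose e : 'rV[R]_d := \row_k (k == Ordinal d_gt0)%:R.
have e_e : dot e e = 1.
  rewrite /dot (bigD1 (Ordinal d_gt0)) //= big1 ?addr0 => [|k /negbTE k0].
    by rewrite !mxE eqxx mulr1.
  by rewrite !mxE k0 mul0r.
have e1 : norm2 e = 1 by rewrite norm2E e_e sqrtr1.
pose S : 'M[R]_(m, d) := \matrix_(j, k) e 0 k.
have rowS j : row j S = e by apply/rowP => k; rewrite !mxE.
pose H : 'M[R]_(m, d) := \matrix_(j, k) (s / m%:R * e 0 k).
have rowH j : row j H = (s / m%:R) *: e by apply/rowP => k; rewrite !mxE.
have S_fixed k : tf_layers phi (fun=> 0) (fun=> 1%:M) (fun _ _ => 1%:M) k S = S.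
  elim: k => [//|k /= ->].
  have -> : att 0 1%:M S = S.
    apply/row_matrixP => i; rewrite row_att rowS.
    under eq_bigr => j _ do rewrite rowS mv1.
    by rewrite -scaler_suml sum_attn scale1r.
  apply/row_matrixP => j; rewrite row_par_mlp rowS mv1.
  by apply/rowP => k0; rewrite mxE act_fun_id // mxE ler0n.
exists H, (fun=> 0), (fun=> 1%:M), (fun _ _ => 1%:M), S; split; [split|split].
- move=> i _; split; first exact: opnorm1_le1.
  by split; [move=> j; exact: opnorm1_le1|apply: opnorm0_le; rewrite divr_ge0 // ltW].
- apply: bigmax_le => [|j _]; first by rewrite divr_ge0 // -s_c.
  by rewrite rowH norm2Z e1 mulr1 normrM s_c ger0_norm ?invr_ge0 ?ler0n.
- by move=> j; rewrite rowS e1.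
rewrite /TF S_fixed.
transitivity (\sum_(j < m) s / m%:R); last first.
  by rewrite sumr_const card_ord -[_ *+ m]mulr_natr divfK ?gt_eqF.
apply: eq_bigr => j _; rewrite -[RHS]mulr1 -{2}e_e mulr_sumr.
by apply: eq_bigr => k _; rewrite !mxE mulrA.
Qed.

End Transformer.

Unset Implicit Arguments.
Set Strict Implicit.

Theorem theorem4 (R : realType) (m d L : nat) (phi : activation) (c Gamma : R) :
  (0 < m)%N -> (0 < d)%N -> 0 < c -> 0 < Gamma ->
  (forall s : R, (s = c \/ s = - c) ->
     exists (H : 'M[R]_(m, d)) (W V : nat -> 'M[R]_d) (M : nat -> 'I_m -> 'M[R]_d)
            (S : 'M[R]_(m, d)),
       valid_weights L c Gamma H W V M /\ valid_input S /\ TF phi L H W V M S = s)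
  /\
  (forall (H : 'M[R]_(m, d)) (W V : nat -> 'M[R]_d) (M : nat -> 'I_m -> 'M[R]_d),
     valid_weights L c Gamma H W V M ->
     forall S S' : 'M[R]_(m, d), valid_input S -> valid_input S' ->
       `|TF phi L H W V M S - TF phi L H W V M S'|
         <= c / m%:R * ((1 + Gamma) * expR Gamma) ^+ L * norm21 (S - S')).
Proof.
move=> m_gt0 d_gt0 c_gt0 Gamma_gt0; split.
- move=> s s_pmc; apply: TF_attains => //.
  by case: s_pmc => ->; rewrite ?normrN gtr0_norm.
- by move=> H W V M weights_le S S' S1 S'1; exact: TF_lipschitz.
Qed.
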